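(* Let $p$ be an odd prime, $l\ge 2$ an integer, and $d$ a positive integer with $p\nmid d$. Then the arithmetic progression $p^l+6dn$, $n=0,1,2,\ldots$, contains no $p$ consecutive terms $p^l+6dn,\,p^l+6d(n+1),\ldots,p^l+6d(n+p-1)$ that are all prime; i.e. it contains no $p$-tuple of primes. *)

From mathcomp Require Import all_boot.

From mathcomp Require Import all_boot.

(* Among any p consecutive values n + k one is a multiple of p. *)

Lemma exists_dvdn_addn (n p : nat) : 0 < p -> exists2 k, k < p & p %| n + k.
Proof.
move=> p_gt0; exists ((p - n %% p) %% p); first by rewrite ltn_pmod.
rewrite /dvdn modnDmr {1}(divn_eq n p) -addnA subnKC; last first.
  by rewrite ltnW // ltn_pmod.
by rewrite -mulSnr modnMl.
Qed.

Lemma notprime_expnD_dvdn (p l m : nat) :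
  prime p -> 2 <= l -> p %| m -> ~~ prime (p ^ l + m).
Proof.
move=> pr_p l_ge2 p_dvd_m; apply/negP => pr_sum.
have p_dvd_sum : p %| p ^ l + m.
  by rewrite dvdn_add // dvdn_exp // (leq_trans _ l_ge2).
move: p_dvd_sum; rewrite dvdn_prime2 // => /eqP p_eq.
have p_lt_pl : p < p ^ l.
  by rewrite -[p in p < _]expn1 ltn_exp2l // prime_gt1.
by move: (leq_trans p_lt_pl (leq_addr m _)); rewrite -p_eq ltnn.
Qed.

Theorem corollary3p5 (p l d : nat) :
  prime p -> odd p -> 2 <= l -> 0 < d -> ~~ (p %| d) ->
  forall n : nat, ~ (forall k : nat, k < p -> prime (p ^ l + 6 * d * (n + k))).
Proof.
move=> pr_p _ l_ge2 _ _ n all_prime.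
have [k k_lt_p p_dvd_nk] := exists_dvdn_addn n p (prime_gt0 pr_p).
have := notprime_expnD_dvdn p l _ pr_p l_ge2 (dvdn_mull (6 * d) p_dvd_nk).
by rewrite all_prime.
Qed.
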